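(* Let $\Pi_1,\Pi_2$ be programs (not necessarily safe) over a function-free signature $\mathcal L$. Then $\Pi_1\equiv_u^{\mathcal E}\Pi_2$ if and only if $\Pi_1\equiv_u^{\mathcal H}\Pi_2$.
   Context: $\mathcal L=\langle\mathcal F,\mathcal P\rangle$ is a function-free first-order signature without equality ($\mathcal F$ consists of object constants). A rule has the form $a_1\vee\dots\vee a_k\vee\neg a_{k+1}\vee\dots\vee\neg a_l\leftarrow b_1,\dots,b_m,\neg b_{m+1},\dots,\neg b_n$ with atoms possibly containing variables, $l\ge k\ge0$, $n\ge m\ge0$, $l+n>0$; a program is a set of rules. A fact is a rule with empty body; a factual program is a set of facts. A rule is identified with the sentence $\forall\vec x(\beta_r\to\alpha_r)$ ($\alpha_r$ the disjunction of head literals, $\bot$ if empty; $\beta_r$ the conjunction of body literals, $\top$ if empty; $\neg p$ read as $p\to\bot$), a program with the theory of its rules. For a universe $\mathcal U$, $\mathcal C_{\mathcal U}=\{c_\varepsilon\}$ are fresh names and $\mathrm{At}(\mathcal P,\mathcal U)$ the atoms over $\mathcal P$ and $\mathcal C_{\mathcal U}$. A QHT-interpretation is $\langle I,J,K\rangle$ with $I$ interpreting the constants on $\mathcal U$ and $J\subseteq K\subseteq\mathrm{At}(\mathcal P,\mathcal U)$. Satisfaction by $M=\langle I,J,K\rangle$: $M\models p(t_1,..,t_n)$ iff $p(c_{t_1^I},..,c_{t_n^I})\in J$; $M\not\models\bot$; $\wedge,\vee$ componentwise; $M\models\phi\to\psi$ iff ($M\not\models\phi$ or $M\models\psi$) and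 $\langle I,K\rangle\models\phi\to\psi$ classically ($\langle I,K\rangle$ makes exactly $K$ true); $M\models\forall x\phi(x)$ iff $M\models\phi(c_\varepsilon)$ and $\langle I,K\rangle\models\phi(c_\varepsilon)$ for all $\varepsilon$; $M\models\exists x\phi(x)$ iff $M\models\phi(c_\varepsilon)$ for some $\varepsilon$. For a program $\Pi$ over a function-free signature $\mathcal L'$: an extended Herbrand interpretation is one on a universe $\mathcal U$ containing the constants of $\mathcal L'$ that interprets every constant as itself; $\langle I,K\rangle$ is an open answer set of $\Pi$ iff it is an extended Herbrand interpretation with $\langle I,K,K\rangle\models\Pi$ and $\langle I,J,K\rangle\not\models\Pi$ for every $J\subsetneq K$. The Herbrand universe $\mathcal H$ is the set of constants of $\mathcal L'$ (a single arbitrary constant if there are none); an ordinary answer set is defined in the same way but with universe exactly $\mathcal H$ and constants interpreted by identity. $\Pi_1\equiv_u^{\mathcal E}\Pi_2$ (resp. $\Pi_1\equiv_u^{\mathcal H}\Pi_2$) iff for every function-free $\mathcal L'\supseteq\mathcal L$ and every factual program $\Pi$ over $\mathcal L'$, $\Pi_1\cup\Pi$ and $\Pi_2\cup\Pi$ have the same open (resp. ordinary) answer sets over $\mathcal L'$. *)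

From Stdlib Require Import List.
Import ListNotations.

Set Implicit Arguments.
Unset Strict Implicit.

Record signature := mkSig {
  Cst : Type;
  Prd : Type;
  ar  : Prd -> nat }.

Inductive term (C : Type) : Type :=
| Var (x : nat)
| Con (c : C).
Arguments Var {C} x.
Arguments Con {C} c.

Record atom (S : signature) := mkAtom {
  apred : Prd S;
  aargs : list (term (Cst S));
  aok   : length aargs = @ar S apred }.

(** Rule  hpos_1 v ... v hpos_k v ~hneg_1 v ... <- bpos_1,...,bpos_m, ~bneg_1,... *)
Record rule (S : signature) := mkRule {
  hpos : list (atom S);
  hneg : list (atom S);
  bpos : list (atom S);
  bneg : list (atom S) }.

Definition is_rule (S : signature) (r : rule S) : Prop :=
  length (hpos r) + length (hneg r) + length (bpos r) + length (bneg r) > 0.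

Definition is_fact (S : signature) (r : rule S) : Prop :=
  is_rule r /\ bpos r = [] /\ bneg r = [].

Definition program (S : signature) := rule S -> Prop.

Definition is_program (S : signature) (P : program S) : Prop :=
  forall r, P r -> is_rule r.

Definition is_factual (S : signature) (P : program S) : Prop :=
  forall r, P r -> is_fact r.

Definition punion (S : signature) (P Q : program S) : program S :=
  fun r => P r \/ Q r.

Inductive form (S : signature) : Type :=
| FAtom (a : atom S)
| FBot
| FAnd (f g : form S)
| FOr  (f g : form S)
| FImp (f g : form S)
| FAll (x : nat) (f : form S)
| FEx  (x : nat) (f : form S).
Arguments FBot {S}.

Definition FTop {S : signature} : form S := FImp FBot FBot.
Definition FNeg {S : signature} (f : form S) : form S := FImp f FBot.

Fixpoint bigand {S : signature} (l : list (form S)) : form S :=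
  match l with
  | [] => FTop
  | [f] => f
  | f :: l' => FAnd f (bigand l')
  end.

Fixpoint bigor {S : signature} (l : list (form S)) : form S :=
  match l with
  | [] => FBot
  | [f] => f
  | f :: l' => FOr f (bigor l')
  end.

Definition term_vars {C : Type} (t : term C) : list nat :=
  match t with Var x => [x] | Con _ => [] end.

Definition atom_vars {S : signature} (a : atom S) : list nat :=
  flat_map term_vars (aargs a).

Definition rule_vars {S : signature} (r : rule S) : list nat :=
  flat_map atom_vars (hpos r ++ hneg r ++ bpos r ++ bneg r).

Definition rule_form {S : signature} (r : rule S) : form S :=
  fold_right (fun x f => FAll x f)
    (FImp (bigand (map (@FAtom S) (bpos r) ++ map (fun a => FNeg (FAtom a)) (bneg r)))
          (bigor  (map (@FAtom S) (hpos r) ++ map (fun a => FNeg (FAtom a)) (hneg r))))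
    (rule_vars r).

(** Ground atoms At(P,U): predicate applied to elements of the universe U
    (i.e. to the names c_eps). *)
Record gatom (S : signature) (U : Type) := mkGAtom {
  gpred : Prd S;
  gargs : list U;
  gok   : length gargs = @ar S gpred }.

Section Semantics.
Variables (S : signature) (U : Type) (I : Cst S -> U).

Definition eval_term (s : nat -> U) (t : term (Cst S)) : U :=
  match t with Var x => s x | Con c => I c end.

Definition eval_atom (s : nat -> U) (a : atom S) : gatom S U :=
  @mkGAtom S U (apred a) (map (eval_term s) (aargs a))
    (eq_trans (length_map _ _) (aok a)).

Definition upd (s : nat -> U) (x : nat) (u : U) : nat -> U :=
  fun y => if Nat.eqb y x then u else s y.

Fixpoint csat (K : gatom S U -> Prop) (s : nat -> U) (f : form S) : Prop :=
  match f with
  | FAtom a => K (eval_atom s a)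
  | FBot => False
  | FAnd f g => csat K s f /\ csat K s g
  | FOr f g => csat K s f \/ csat K s g
  | FImp f g => csat K s f -> csat K s g
  | FAll x f => forall u, csat K (upd s x u) f
  | FEx x f => exists u, csat K (upd s x u) f
  end.

Fixpoint htsat (J K : gatom S U -> Prop) (s : nat -> U) (f : form S) : Prop :=
  match f with
  | FAtom a => J (eval_atom s a)
  | FBot => False
  | FAnd f g => htsat J K s f /\ htsat J K s g
  | FOr f g => htsat J K s f \/ htsat J K s g
  | FImp f g => (~ htsat J K s f \/ htsat J K s g) /\ csat K s (FImp f g)
  | FAll x f => forall u, htsat J K (upd s x u) f /\ csat K (upd s x u) f
  | FEx x f => exists u, htsat J K (upd s x u) f
  end.

(** <I,J,K> |= Pi  (rule sentences are closed, so the assignment is immaterial) *)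
Definition htsat_prog (J K : gatom S U -> Prop) (P : program S) : Prop :=
  forall r, P r -> forall s : nat -> U, htsat J K s (rule_form r).

Definition subset (J K : gatom S U -> Prop) : Prop := forall a, J a -> K a.
Definition strict_subset (J K : gatom S U -> Prop) : Prop :=
  subset J K /\ exists a, K a /\ ~ J a.

Definition equilibrium (P : program S) (K : gatom S U -> Prop) : Prop :=
  htsat_prog K K P /\
  forall J, strict_subset J K -> ~ htsat_prog J K P.

End Semantics.

Definition injective {A B : Type} (f : A -> B) : Prop :=
  forall x y, f x = f y -> x = y.
Definition surjective {A B : Type} (f : A -> B) : Prop :=
  forall y, exists x, f x = y.

(** Open answer set <I,K>: an extended Herbrand interpretation, i.e. a
    (nonempty) universe U containing the constants of S (via the injection I,
    each constant interpreted as itself). *)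
Definition open_answer_set (S : signature) (P : program S)
    (U : Type) (I : Cst S -> U) (K : gatom S U -> Prop) : Prop :=
  inhabited U /\ injective I /\ equilibrium I P K.

(** Ordinary answer set: the universe is exactly the Herbrand universe H,
    i.e. the set of constants of S (I a bijection, identity up to renaming),
    or a single arbitrary element if S has no constants. *)
Definition herbrand_universe (S : signature) (U : Type) (I : Cst S -> U) : Prop :=
  (inhabited (Cst S) -> injective I /\ surjective I) /\
  (~ inhabited (Cst S) -> exists u0 : U, forall u : U, u = u0).

Definition ordinary_answer_set (S : signature) (P : program S)
    (U : Type) (I : Cst S -> U) (K : gatom S U -> Prop) : Prop :=
  herbrand_universe I /\ equilibrium I P K.

Record extension (L L' : signature) := mkExt {
  ec : Cst L -> Cst L';
  ep : Prd L -> Prd L';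
  ec_inj : injective ec;
  ep_inj : injective ep;
  ep_ar : forall p, @ar L' (ep p) = @ar L p }.

Section Translate.
Variables (L L' : signature) (X : extension L L').

Definition tr_term (t : term (Cst L)) : term (Cst L') :=
  match t with Var x => Var x | Con c => Con (ec X c) end.

Definition tr_atom (a : atom L) : atom L' :=
  @mkAtom L' (ep X (apred a)) (map tr_term (aargs a))
    (eq_trans (length_map _ _) (eq_trans (aok a) (eq_sym (ep_ar X (apred a))))).

Definition tr_rule (r : rule L) : rule L' :=
  mkRule (map tr_atom (hpos r)) (map tr_atom (hneg r))
         (map tr_atom (bpos r)) (map tr_atom (bneg r)).

Definition tr_prog (P : program L) : program L' :=
  fun r' => exists r, P r /\ r' = tr_rule r.
End Translate.

Definition unif_equiv_E (L : signature) (P1 P2 : program L) : Prop :=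
  forall (L' : signature) (X : extension L L') (F : program L'),
    is_factual F ->
    forall (U : Type) (I : Cst L' -> U) (K : gatom L' U -> Prop),
      open_answer_set (punion (tr_prog X P1) F) I K <->
      open_answer_set (punion (tr_prog X P2) F) I K.

Definition unif_equiv_H (L : signature) (P1 P2 : program L) : Prop :=
  forall (L' : signature) (X : extension L L') (F : program L'),
    is_factual F ->
    forall (U : Type) (I : Cst L' -> U) (K : gatom L' U -> Prop),
      ordinary_answer_set (punion (tr_prog X P1) F) I K <->
      ordinary_answer_set (punion (tr_prog X P2) F) I K.

From Stdlib Require Import List Classical FunctionalExtensionality PropExtensionality.
Import ListNotations.

Set Implicit Arguments.
Unset Strict Implicit.

(* Every ordinary answer set is an open one, which gives one direction.
   Conversely, an open answer set <I,K> on a universe U is an ordinary answer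
   set once the signature is extended by a fresh constant naming each element
   of U, because translating rules and facts along a signature extension
   preserves QHT satisfaction, and the translated facts are still facts. *)

Lemma gatom_ext (S : signature) (U : Type) (a b : gatom S U) :
  gpred a = gpred b -> gargs a = gargs b -> a = b.
Proof.
  destruct a as [p1 a1 o1], b as [p2 a2 o2]; simpl; intros; subst.
  f_equal; apply proof_irrelevance.
Qed.

Lemma atom_ext (S : signature) (a b : atom S) :
  apred a = apred b -> aargs a = aargs b -> a = b.
Proof.
  destruct a as [p1 a1 o1], b as [p2 a2 o2]; simpl; intros; subst.
  f_equal; apply proof_irrelevance.
Qed.

Definition ext_comp (L1 L2 L3 : signature) (X : extension L1 L2)
    (Y : extension L2 L3) : extension L1 L3 :=
  @mkExt L1 L3 (fun c => ec Y (ec X c)) (fun p => ep Y (ep X p))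
    (fun c d h => @ec_inj _ _ X _ _ (@ec_inj _ _ Y _ _ h))
    (fun p q h => @ep_inj _ _ X _ _ (@ep_inj _ _ Y _ _ h))
    (fun p => eq_trans (@ep_ar _ _ Y (ep X p)) (@ep_ar _ _ X p)).

Lemma tr_rule_comp (L1 L2 L3 : signature) (X : extension L1 L2)
    (Y : extension L2 L3) (r : rule L1) :
  tr_rule (ext_comp X Y) r = tr_rule Y (tr_rule X r).
Proof.
  assert (Hatoms : forall l, map (tr_atom (ext_comp X Y)) l =
                             map (tr_atom Y) (map (tr_atom X) l)).
  { intros l; rewrite map_map; apply map_ext; intros a.
    apply atom_ext; simpl; [reflexivity|].
    rewrite map_map; apply map_ext; intros [x|c]; reflexivity. }
  unfold tr_rule; simpl; rewrite !Hatoms; reflexivity.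
Qed.

Lemma tr_prog_punion_comp (L1 L2 L3 : signature) (X : extension L1 L2)
    (Y : extension L2 L3) (P : program L1) (F : program L2) :
  tr_prog Y (punion (tr_prog X P) F) =
  punion (tr_prog (ext_comp X Y) P) (tr_prog Y F).
Proof.
  apply functional_extensionality; intros r'; apply propositional_extensionality.
  unfold tr_prog, punion; split.
  - intros [r [[[r0 [Hr0 ->]] | HF] ->]].
    + left; exists r0; split; [exact Hr0 | symmetry; apply tr_rule_comp].
    + right; exists r; auto.
  - intros [[r [Hr ->]] | [r [Hr ->]]].
    + exists (tr_rule X r); split; [left; exists r; auto | apply tr_rule_comp].
    + exists r; auto.
Qed.

Lemma tr_prog_factual (L L' : signature) (Y : extension L L') (F : program L) :
  is_factual F -> is_factual (tr_prog Y F).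
Proof.
  intros HF r [f [Hf ->]]; destruct (HF f Hf) as [Hr [Hb1 Hb2]].
  split; [unfold is_rule in *; simpl; rewrite !length_map; exact Hr|].
  simpl; rewrite Hb1, Hb2; auto.
Qed.

Section Translation.
Variables (L L' : signature) (Y : extension L L') (U : Type) (I' : Cst L' -> U).

Let I : Cst L -> U := fun c => I' (ec Y c).

Definition tr_gatom (g : gatom L U) : gatom L' U :=
  @mkGAtom L' U (ep Y (gpred g)) (gargs g) (eq_trans (gok g) (eq_sym (@ep_ar _ _ Y _))).

Lemma eval_atom_tr s a :
  eval_atom I' s (tr_atom Y a) = tr_gatom (eval_atom I s a).
Proof.
  apply gatom_ext; simpl; [reflexivity|].
  rewrite map_map; apply map_ext; intros [x|c]; reflexivity.
Qed.

Fixpoint tr_form (f : form L) : form L' :=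
  match f with
  | FAtom a => FAtom (tr_atom Y a)
  | FBot => FBot
  | FAnd f g => FAnd (tr_form f) (tr_form g)
  | FOr f g => FOr (tr_form f) (tr_form g)
  | FImp f g => FImp (tr_form f) (tr_form g)
  | FAll x f => FAll x (tr_form f)
  | FEx x f => FEx x (tr_form f)
  end.

Lemma tr_form_bigand l : tr_form (bigand l) = bigand (map tr_form l).
Proof.
  induction l as [|f [|g l] IH]; [reflexivity | reflexivity |].
  change (FAnd (tr_form f) (tr_form (bigand (g :: l))) =
          FAnd (tr_form f) (bigand (map tr_form (g :: l)))).
  rewrite IH; reflexivity.
Qed.

Lemma tr_form_bigor l : tr_form (bigor l) = bigor (map tr_form l).
Proof.
  induction l as [|f [|g l] IH]; [reflexivity | reflexivity |].
  change (FOr (tr_form f) (tr_form (bigor (g :: l))) =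
          FOr (tr_form f) (bigor (map tr_form (g :: l)))).
  rewrite IH; reflexivity.
Qed.

Lemma rule_vars_tr r : rule_vars (tr_rule Y r) = rule_vars r.
Proof.
  assert (Hatom : forall a, atom_vars (tr_atom Y a) = atom_vars a).
  { intros a; unfold atom_vars; simpl.
    induction (aargs a) as [|[x|c] l IH]; simpl; rewrite ?IH; reflexivity. }
  unfold rule_vars; simpl; rewrite <- !map_app.
  induction (hpos r ++ hneg r ++ bpos r ++ bneg r) as [|a l IH]; simpl;
    rewrite ?Hatom, ?IH; reflexivity.
Qed.

Lemma rule_form_tr r : rule_form (tr_rule Y r) = tr_form (rule_form r).
Proof.
  unfold rule_form; rewrite rule_vars_tr.
  induction (rule_vars r) as [|x vs IH]; [|cbn [fold_right tr_form]; f_equal; exact IH].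
  simpl; rewrite tr_form_bigand, tr_form_bigor, !map_app, !map_map; reflexivity.
Qed.

Section Satisfaction.
Variables (J K : gatom L U -> Prop) (J' K' : gatom L' U -> Prop).
Hypothesis HJ : forall g, J' (tr_gatom g) <-> J g.
Hypothesis HK : forall g, K' (tr_gatom g) <-> K g.

Lemma sat_tr f s :
  (csat I' K' s (tr_form f) <-> csat I K s f) /\
  (htsat I' J' K' s (tr_form f) <-> htsat I J K s f).
Proof.
  revert s; induction f as [a| |f IHf g IHg|f IHf g IHg|f IHf g IHg|x f IHf|x f IHf];
    intros s; simpl.
  - rewrite eval_atom_tr, HJ, HK; tauto.
  - tauto.
  - destruct (IHf s), (IHg s); tauto.
  - destruct (IHf s), (IHg s); tauto.
  - destruct (IHf s), (IHg s); tauto.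
  - split; split; intros H u; destruct (IHf (upd s x u)); firstorder.
  - split; split; intros [u H]; exists u; destruct (IHf (upd s x u)); tauto.
Qed.

Lemma htsat_prog_tr (Q : program L) :
  htsat_prog I' J' K' (tr_prog Y Q) <-> htsat_prog I J K Q.
Proof.
  split.
  - intros H r Hr s; apply (proj2 (sat_tr _ s)); rewrite <- rule_form_tr.
    apply H; exists r; auto.
  - intros H r' [r [Hr ->]] s; rewrite rule_form_tr.
    apply (proj2 (sat_tr _ s)); apply H, Hr.
Qed.

End Satisfaction.

Variable untr : gatom L' U -> gatom L U.
Hypothesis tr_gatomK : forall g, untr (tr_gatom g) = g.
Hypothesis untrK : forall g, tr_gatom (untr g) = g.

Lemma equilibrium_tr (Q : program L) (K : gatom L U -> Prop) :
  equilibrium I' (tr_prog Y Q) (fun g => K (untr g)) <-> equilibrium I Q K.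
Proof.
  assert (HK : forall g, K (untr (tr_gatom g)) <-> K g)
    by (intros g; rewrite tr_gatomK; tauto).
  split; intros [Hsat Hmin]; split.
  - exact (proj1 (htsat_prog_tr HK HK Q) Hsat).
  - intros J [Hsub [g [HKg HnJ]]] HJsat.
    apply (Hmin (fun g => J (untr g))).
    + split; [intros g' Hg'; apply Hsub, Hg' |].
      exists (tr_gatom g); rewrite tr_gatomK; auto.
    + refine (proj2 (htsat_prog_tr _ HK Q) HJsat).
      intros g'; rewrite tr_gatomK; tauto.
  - exact (proj2 (htsat_prog_tr HK HK Q) Hsat).
  - intros J' [Hsub [g [HKg HnJ]]] HJsat.
    apply (Hmin (fun g => J' (tr_gatom g))).
    + split; [intros g' Hg'; rewrite <- tr_gatomK; apply Hsub, Hg' |].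
      exists (untr g); rewrite untrK; auto.
    + exact (proj1 (htsat_prog_tr (fun g' => iff_refl _) HK Q) HJsat).
Qed.

End Translation.

Lemma herbrand_universe_open (S : signature) (U : Type) (I : Cst S -> U) :
  herbrand_universe I -> inhabited U /\ injective I.
Proof.
  intros [Hcst Hnocst]; split.
  - destruct (classic (inhabited (Cst S))) as [[c]|Hn].
    + exact (inhabits (I c)).
    + destruct (Hnocst Hn) as [u0 _]; exact (inhabits u0).
  - intros c d; apply (proj1 (Hcst (inhabits c))).
Qed.

Lemma ordinary_answer_set_open (S : signature) (P : program S) (U : Type)
    (I : Cst S -> U) (K : gatom S U -> Prop) :
  ordinary_answer_set P I K <-> herbrand_universe I /\ open_answer_set P I K.
Proof.
  unfold ordinary_answer_set, open_answer_set; split.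
  - intros [Hh Heq]; destruct (herbrand_universe_open Hh); tauto.
  - tauto.
Qed.

(* The names c_eps: every element of U becomes a constant; the original
   constants are identified with their (injective) interpretation. *)
Definition universe_sig (L : signature) (U : Type) : signature :=
  @mkSig U (Prd L) (@ar L).

Lemma herbrand_universe_sig (L : signature) (U : Type) :
  inhabited U -> herbrand_universe (fun u : Cst (universe_sig L U) => u).
Proof.
  intros [u0]; split.
  - intros _; split; [intros x y h; exact h | intros y; exists y; reflexivity].
  - intros Hn; exfalso; exact (Hn (inhabits u0)).
Qed.

Section Naming.
Variables (L : signature) (U : Type) (I : Cst L -> U) (Iinj : injective I).

Definition naming_ext : extension L (universe_sig L U) :=
  @mkExt L (universe_sig L U) I (fun p => p) Iinj (fun _ _ h => h) (fun _ => eq_refl).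

Definition untag (g : gatom (universe_sig L U) U) : gatom L U :=
  @mkGAtom L U (gpred g) (gargs g) (gok g).

Lemma open_answer_set_ordinary (Q : program L) (K : gatom L U -> Prop) :
  open_answer_set Q I K <->
  ordinary_answer_set (tr_prog naming_ext Q) (fun u => u) (fun g => K (untag g)).
Proof.
  assert (Hequil := @equilibrium_tr _ _ naming_ext U (fun u => u) untag
                      ltac:(intros [p l o]; reflexivity)
                      ltac:(intros g; apply gatom_ext; reflexivity) Q K).
  rewrite ordinary_answer_set_open; unfold open_answer_set.
  split.
  - intros [Hinh [_ Heq]].
    split; [apply herbrand_universe_sig, Hinh|].
    split; [exact Hinh|]; split; [intros x y h; exact h|]; apply Hequil, Heq.
  - intros [_ [Hinh [_ Heq]]]; split; [exact Hinh|]; split; [exact Iinj|].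
    apply Hequil, Heq.
Qed.

End Naming.

Lemma open_answer_set_transfer (L : signature) (P1 P2 : program L) :
  unif_equiv_H P1 P2 ->
  forall (L' : signature) (X : extension L L') (F : program L'),
    is_factual F ->
    forall (U : Type) (I : Cst L' -> U) (K : gatom L' U -> Prop),
      open_answer_set (punion (tr_prog X P1) F) I K ->
      open_answer_set (punion (tr_prog X P2) F) I K.
Proof.
  intros HH L' X F HF U I K Hopen.
  pose proof Hopen as [_ [Iinj _]].
  rewrite (open_answer_set_ordinary Iinj), tr_prog_punion_comp in *.
  apply (HH _ _ _ (tr_prog_factual (Y := naming_ext Iinj) HF)); exact Hopen.
Qed.

Theorem mainTheorem19 (L : signature) (P1 P2 : program L)
  (H1 : is_program P1) (H2 : is_program P2) :
  unif_equiv_E P1 P2 <-> unif_equiv_H P1 P2.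
Proof.
  split.
  - intros HE L' X F HF U I K.
    rewrite !ordinary_answer_set_open, (HE L' X F HF U I K); reflexivity.
  - intros HH L' X F HF U I K; split; apply open_answer_set_transfer; auto.
    intros L'' X' F' HF' U' I' K'; symmetry; apply HH, HF'.
Qed.
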